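(* Let $\mathbf A \in \mathbb{H}^{M\times K}$, $\mathbf B \in \mathbb{H}^{K\times L}$ and $\mathbf C \in \mathbb{H}^{L\times N}$. Then $$\begin{aligned} \operatorname{vec}\big(\mathbf A \cdot_{\mathrm L} [\mathbf B \cdot_{\mathrm R} \mathbf C]\big) &= (\mathbf C^{\mathrm T} \otimes_{\mathrm R} \mathbf A)\cdot_{\mathrm L} \operatorname{vec}(\mathbf B),\\ \operatorname{vec}\big(\mathbf A \cdot_{\mathrm R} [\mathbf B \cdot_{\mathrm L} \mathbf C]\big) &= (\mathbf C^{\mathrm T} \otimes_{\mathrm L} \mathbf A)\cdot_{\mathrm R} \operatorname{vec}(\mathbf B),\\ \operatorname{vec}\big([\mathbf A \cdot_{\mathrm L} \mathbf B] \cdot_{\mathrm R} \mathbf C\big) &= (\mathbf C^{\mathrm T} \otimes_{\mathrm L} \mathbf A)\cdot_{\mathrm L} \operatorname{vec}(\mathbf B),\\ \operatorname{vec}\big([\mathbf A \cdot_{\mathrm R} \mathbf B] \cdot_{\mathrm L} \mathbf C\big) &= (\mathbf C^{\mathrm T} \otimes_{\mathrm R} \mathbf A)\cdot_{\mathrm R} \operatorname{vec}(\mathbf B). \end{aligned}$$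
   Context: $\mathbb{H}$ denotes the skew field of real quaternions and $^{\mathrm T}$ the (non-conjugating) transpose. For quaternion matrices, the left matrix product is $[\mathbf X \cdot_{\mathrm L} \mathbf Y]_{m,n} = \sum_{k} [\mathbf X]_{m,k}[\mathbf Y]_{k,n}$ and the right matrix product is $[\mathbf X \cdot_{\mathrm R} \mathbf Y]_{m,n} = \sum_{k} [\mathbf Y]_{k,n}[\mathbf X]_{m,k}$ (vectors are treated as one-column matrices). For $\mathbf X\in\mathbb{H}^{P\times Q}$, $\operatorname{vec}(\mathbf X)\in\mathbb{H}^{PQ\times 1}$ is the column-stacking vectorization, $[\operatorname{vec}(\mathbf X)]_{p+(q-1)P} = [\mathbf X]_{p,q}$. The left Kronecker product $\mathbf X \otimes_{\mathrm L} \mathbf Y$ is the block matrix whose $(i,j)$ block is $[\mathbf X]_{i,j}\,\mathbf Y$ (entries of $\mathbf Y$ multiplied on the left by $[\mathbf X]_{i,j}$); the right Kronecker product $\mathbf X \otimes_{\mathrm R} \mathbf Y$ is the block matrix whose $(i,j)$ block is $\mathbf Y\,[\mathbf X]_{i,j}$ (entries of $\mathbf Y$ multiplied on the right by $[\mathbf X]_{i,j}$). *)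

From HB Require Import structures.
From mathcomp Require Import all_boot all_order all_algebra.
From mathcomp Require Import ring.
From mathcomp Require Import reals.
Set Implicit Arguments.
Unset Strict Implicit.
Unset Printing Implicit Defensive.
Import Order.TTheory GRing.Theory Num.Theory.
Local Open Scope ring_scope.

Section Quaternions.
Variable R : realType.

(* a + b i + c j + d k *)
Record quat := Quat { qre : R; qi : R; qj : R; qk : R }.

Definition quat_to (q : quat) : R * R * R * R := (qre q, qi q, qj q, qk q).
Definition quat_of (x : R * R * R * R) : quat :=
  let: (a, b, c, d) := x in Quat a b c d.
Lemma quat_toK : cancel quat_to quat_of. Proof. by case. Qed.

HB.instance Definition _ := Equality.copy quat (can_type quat_toK).
HB.instance Definition _ := Choice.copy quat (can_type quat_toK).

Definition qzero := Quat 0 0 0 0.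
Definition qadd (p q : quat) :=
  Quat (qre p + qre q) (qi p + qi q) (qj p + qj q) (qk p + qk q).
Definition qopp (p : quat) := Quat (- qre p) (- qi p) (- qj p) (- qk p).

Lemma qaddA : associative qadd.
Proof. by case=> ? ? ? ? [? ? ? ?] [? ? ? ?]; rewrite /qadd /= !addrA. Qed.
Lemma qaddC : commutative qadd.
Proof.
by case=> a b c d [a' b' c' d']; rewrite /qadd /= (addrC a) (addrC b) (addrC c) (addrC d).
Qed.
Lemma qadd0 : left_id qzero qadd.
Proof. by case=> ? ? ? ?; rewrite /qadd /= !add0r. Qed.
Lemma qaddN : left_inverse qzero qopp qadd.
Proof. by case=> ? ? ? ?; rewrite /qadd /= !addNr. Qed.

HB.instance Definition _ := GRing.isZmodule.Build quat qaddA qaddC qadd0 qaddN.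

Definition qone := Quat 1 0 0 0.
(* Hamilton product: i^2 = j^2 = k^2 = ijk = -1 *)
Definition qmul (p q : quat) :=
  let: Quat a1 b1 c1 d1 := p in
  let: Quat a2 b2 c2 d2 := q in
  Quat (a1 * a2 - b1 * b2 - c1 * c2 - d1 * d2)
       (a1 * b2 + b1 * a2 + c1 * d2 - d1 * c2)
       (a1 * c2 - b1 * d2 + c1 * a2 + d1 * b2)
       (a1 * d2 + b1 * c2 - c1 * b2 + d1 * a2).

Lemma qmulA : associative qmul.
Proof. by case=> ? ? ? ? [? ? ? ?] [? ? ? ?]; rewrite /qmul /=; congr Quat; ring. Qed.
Lemma qmul1 : left_id qone qmul.
Proof. by case=> ? ? ? ?; rewrite /qmul /=; congr Quat; ring. Qed.
Lemma qmulr1 : right_id qone qmul.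
Proof. by case=> ? ? ? ?; rewrite /qmul /=; congr Quat; ring. Qed.
Lemma qmulDl : left_distributive qmul qadd.
Proof. by case=> ? ? ? ? [? ? ? ?] [? ? ? ?]; rewrite /qmul /qadd /=; congr Quat; ring. Qed.
Lemma qmulDr : right_distributive qmul qadd.
Proof. by case=> ? ? ? ? [? ? ? ?] [? ? ? ?]; rewrite /qmul /qadd /=; congr Quat; ring. Qed.
Lemma qone_neq0 : qone != qzero.
Proof. by apply/eqP => -[/eqP]; rewrite oner_eq0. Qed.

HB.instance Definition _ :=
  GRing.Zmodule_isNzRing.Build quat qmulA qmul1 qmulr1 qmulDl qmulDr qone_neq0.

End Quaternions.

Notation "'H[' R ]" := (quat R) (format "'H[' R ]").

Lemma ord_div_proof (m n : nat) (k : 'I_(m * n)) : (k %/ n < m)%N.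
Proof.
case: n k => [|n] [k /= hk]; first by rewrite muln0 in hk.
by rewrite ltn_divLR.
Qed.
Lemma ord_mod_proof (m n : nat) (k : 'I_(m * n)) : (k %% n < n)%N.
Proof.
case: n k => [|n] [k /= hk]; first by rewrite muln0 in hk.
by rewrite ltn_mod.
Qed.
Definition ord_div (m n : nat) (k : 'I_(m * n)) : 'I_m := Ordinal (ord_div_proof k).
Definition ord_mod (m n : nat) (k : 'I_(m * n)) : 'I_n := Ordinal (ord_mod_proof k).

Section QMatrix.
Variable R : realType.
Local Notation H := (quat R).

Definition mulL (m k n : nat) (X : 'M[H]_(m, k)) (Y : 'M[H]_(k, n)) : 'M[H]_(m, n) :=
  \matrix_(i < m, j < n) \sum_(l < k) X i l * Y l j.
Definition mulR (m k n : nat) (X : 'M[H]_(m, k)) (Y : 'M[H]_(k, n)) : 'M[H]_(m, n) :=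
  \matrix_(i < m, j < n) \sum_(l < k) Y l j * X i l.

(* column-stacking vectorization: [vec X]_{p + q P} = X_{p,q} (0-based) *)
Definition qvec (P Q : nat) (X : 'M[H]_(P, Q)) : 'cV[H]_(Q * P) :=
  \col_(r < Q * P) X (ord_mod r) (ord_div r).

(* left Kronecker product: block (i,j) is X_{i,j} Y
   (entries of Y multiplied on the left by X_{i,j}) *)
Definition kronL (m1 n1 m2 n2 : nat) (X : 'M[H]_(m1, n1)) (Y : 'M[H]_(m2, n2))
  : 'M[H]_(m1 * m2, n1 * n2) :=
  \matrix_(i < m1 * m2, j < n1 * n2)
     (X (ord_div i) (ord_div j) * Y (ord_mod i) (ord_mod j)).
(* right Kronecker product: block (i,j) is Y X_{i,j}
   (entries of Y multiplied on the right by X_{i,j}) *)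
Definition kronR (m1 n1 m2 n2 : nat) (X : 'M[H]_(m1, n1)) (Y : 'M[H]_(m2, n2))
  : 'M[H]_(m1 * m2, n1 * n2) :=
  \matrix_(i < m1 * m2, j < n1 * n2)
     (Y (ord_mod i) (ord_mod j) * X (ord_div i) (ord_div j)).
End QMatrix.

(* Both sides of each identity have (p + qM)-th entry a double sum over k < K and l < L of
   the same product of [A p k], [B k l] and [C l q] taken in the same order; only the
   bracketing differs. The right-hand sides run over the single index s < L K, which is the
   pair (s %/ K, s %% K), so they split into the double sum, and associativity finishes. *)
From HB Require Import structures.
From mathcomp Require Import all_boot all_order all_algebra.
From mathcomp Require Import reals.
Import GRing.Theory.
Local Open Scope ring_scope.

Lemma ord_pair_proof {m n : nat} (i : 'I_m) (j : 'I_n) : (i * n + j < m * n)%N.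
Proof.
apply: (@leq_trans (i * n + n)); first by rewrite ltn_add2l.
by rewrite -mulSnr leq_mul2r ltn_ord orbT.
Qed.

Definition ord_pair {m n : nat} (i : 'I_m) (j : 'I_n) : 'I_(m * n) :=
  Ordinal (ord_pair_proof i j).

Section OrdPair.
Context {m n : nat}.

Lemma ord_div_pair (i : 'I_m) (j : 'I_n) : ord_div (ord_pair i j) = i.
Proof.
apply: val_inj => /=; have n_gt0 : (0 < n)%N by apply: leq_ltn_trans (ltn_ord j).
by rewrite divnMDl // divn_small ?addn0.
Qed.

Lemma ord_mod_pair (i : 'I_m) (j : 'I_n) : ord_mod (ord_pair i j) = j.
Proof. by apply: val_inj => /=; rewrite modnMDl modn_small. Qed.

Lemma ord_pair_divmod (k : 'I_(m * n)) : ord_pair (ord_div k) (ord_mod k) = k.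
Proof. by apply: val_inj => /=; rewrite -divn_eq. Qed.

Lemma sum_ord_divmod {V : nmodType} (F : 'I_m -> 'I_n -> V) :
  \sum_(k < m * n) F (ord_div k) (ord_mod k) = \sum_(i < m) \sum_(j < n) F i j.
Proof.
rewrite pair_bigA (reindex (fun k => (ord_div k, ord_mod k))) //=.
exists (fun p => ord_pair p.1 p.2) => [k _ | [i j] _]; first exact: ord_pair_divmod.
by rewrite ord_div_pair ord_mod_pair.
Qed.

End OrdPair.

Section VecKron.
Variables (R : realType) (M K L N : nat).
Variables (A : 'M[H[R]]_(M, K)) (B : 'M[H[R]]_(K, L)) (C : 'M[H[R]]_(L, N)).

Lemma qvec_mulL_mulR : qvec (mulL A (mulR B C)) = mulL (kronR C^T A) (qvec B).
Proof.
apply/matrixP => r c; rewrite !mxE.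
under [RHS]eq_bigr do rewrite !mxE.
rewrite (sum_ord_divmod (fun l k => A (ord_mod r) k * C l (ord_div r) * B k l))
  exchange_big /=.
apply: eq_bigr => k _; rewrite !mxE mulr_sumr.
by apply: eq_bigr => l _; rewrite mulrA.
Qed.

Lemma qvec_mulR_mulL : qvec (mulR A (mulL B C)) = mulR (kronL C^T A) (qvec B).
Proof.
apply/matrixP => r c; rewrite !mxE.
under [RHS]eq_bigr do rewrite !mxE.
rewrite (sum_ord_divmod (fun l k => B k l * (C l (ord_div r) * A (ord_mod r) k)))
  exchange_big /=.
apply: eq_bigr => k _; rewrite !mxE mulr_suml.
by apply: eq_bigr => l _; rewrite mulrA.
Qed.

Lemma qvec_mulLR_mulR : qvec (mulR (mulL A B) C) = mulL (kronL C^T A) (qvec B).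
Proof.
apply/matrixP => r c; rewrite !mxE.
under [RHS]eq_bigr do rewrite !mxE.
rewrite (sum_ord_divmod (fun l k => C l (ord_div r) * A (ord_mod r) k * B k l)).
apply: eq_bigr => l _; rewrite !mxE mulr_sumr.
by apply: eq_bigr => k _; rewrite mulrA.
Qed.

Lemma qvec_mulRL_mulL : qvec (mulL (mulR A B) C) = mulR (kronR C^T A) (qvec B).
Proof.
apply/matrixP => r c; rewrite !mxE.
under [RHS]eq_bigr do rewrite !mxE.
rewrite (sum_ord_divmod (fun l k => B k l * (A (ord_mod r) k * C l (ord_div r)))).
apply: eq_bigr => l _; rewrite !mxE mulr_suml.
by apply: eq_bigr => k _; rewrite mulrA.
Qed.

End VecKron.

Theorem mainTheorem6 (R : realType) (M K L N : nat)
    (A : 'M[H[R]]_(M, K)) (B : 'M[H[R]]_(K, L)) (C : 'M[H[R]]_(L, N)) :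
  [/\ qvec (mulL A (mulR B C)) = mulL (kronR C^T A) (qvec B),
      qvec (mulR A (mulL B C)) = mulR (kronL C^T A) (qvec B),
      qvec (mulR (mulL A B) C) = mulL (kronL C^T A) (qvec B)
    & qvec (mulL (mulR A B) C) = mulR (kronR C^T A) (qvec B)].
Proof.
split; [exact: qvec_mulL_mulR | exact: qvec_mulR_mulL
       | exact: qvec_mulLR_mulR | exact: qvec_mulRL_mulL].
Qed.
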